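(* Let $n\ge2$ and let $E_1,\dots,E_n,H_1,\dots,H_n$ be logically independent events with $H_i\ne\emptyset$ for all $i$. Then the set $\Pi$ of all coherent prevision assessments $(x_1,\dots,x_n,x_{1\cdots n})$ on $\mathcal F=\{E_1|H_1,\dots,E_n|H_n,\mathscr C_{1\cdots n}\}$ is $$\Pi=\{(x_1,\dots,x_n,x_{1\cdots n}):(x_1,\dots,x_n)\in[0,1]^n,\ T_L(x_1,\dots,x_n)\le x_{1\cdots n}\le T_M(x_1,\dots,x_n)\},$$ where $T_L(x_1,\dots,x_n)=\max\{\sum_{i=1}^nx_i-n+1,0\}$ and $T_M(x_1,\dots,x_n)=\min\{x_1,\dots,x_n\}$. In particular the Fréchet–Hoeffding bounds for the prevision of the conjunction are sharp.
   Context: Events are identified with their indicators; $\bar E$ is the negation of $E$ and $EH$ the conjunction. For events $E,H$ with $H\neq\emptyset$, the conditional event $E|H$ is true if $EH$ is true, false if $\bar EH$ is true, void if $\bar H$ is true; once $P(E|H)=x$ is assessed, $E|H$ is identified with the random quantity $EH+x\bar H$. More generally a finite conditional random quantity $X|H$ with assessed prevision $\mu=\mathbb P(X|H)$ is identified with $XH+\mu\bar H$. Coherence (de Finetti): a prevision assessment $(\mu_1,\dots,\mu_m)$ on a family $\{X_1|H_1,\dots,X_m|H_m\}$ is coherent iff for every choice of real stakes $s_1,\dots,s_m$ the random gain $G=\sum_{i}s_iH_i(X_i-\mu_i)$, restricted to the values it can take when $H_1\vee\dots\vee H_m$ is true, satisfies $\min G\le 0\le\max G$ (and the same holds for every subfamily).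 Events $E_1,\dots,E_n,H_1,\dots,H_n$ are logically independent if all $2^{2n}$ conjunctions of these events or their negations are nonempty. Conjunction of $n$ conditional events: for every nonempty $S\subseteq\{1,\dots,n\}$ let $x_S$ be a prevision value assigned to $\mathscr C_S=\bigwedge_{i\in S}(E_i|H_i)$ (defined recursively, $\mathscr C_{\{i\}}=E_i|H_i$, $x_{\{i\}}=x_i$). Then $\mathscr C_{1\cdots n}$ is the random quantity equal to $1$ if $\bigwedge_{i=1}^nE_iH_i$ is true; $0$ if $\bigvee_{i=1}^n\bar E_iH_i$ is true; $x_S$ if $(\bigwedge_{i\in S}\bar H_i)\wedge(\bigwedge_{i\notin S}E_iH_i)$ is true, for each nonempty strict subset $S$; and $x_{1\cdots n}=\mathbb P(\mathscr C_{1\cdots n})$ if $\bigwedge_{i=1}^n\bar H_i$ is true. The values $x_S$ of the strict sub-conjunctions are fixed (coherently assessed) beforehand; the statement concerns the assessment on $\mathcal F$. *)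

From HB Require Import structures.
From mathcomp Require Import all_boot all_order all_algebra.
From mathcomp Require Import reals.
Set Implicit Arguments. Unset Strict Implicit. Unset Printing Implicit Defensive.
Import Order.TTheory GRing.Theory Num.Theory.
Local Open Scope ring_scope.

Section Defs.
Variable R : realType.

(* De Finetti coherence of a prevision assessment [mu] on a finite family of
   conditional random quantities {X_j | Hc_j : j in D}: for every subfamily J
   of D and every choice of real stakes s, the random gain
   G = sum_{j in J} s_j Hc_j (X_j - mu_j), restricted to the outcomes where
   the disjunction of the conditioning events of J is true, satisfies
   min G <= 0 <= max G. *)
Definition coherent_on (Omega : Type) (I : finType) (D : {set I})
  (X : I -> Omega -> R) (Hc : I -> Omega -> bool) (mu : I -> R) : Prop :=
  forall (J : {set I}) (s : I -> R), J \subset D ->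
    let G := fun w => \sum_(j in J) s j * (Hc j w)%:R * (X j w - mu j) in
    (exists w, [exists j in J, Hc j w]) ->
    (exists w, [exists j in J, Hc j w] /\ G w <= 0) /\
    (exists w, [exists j in J, Hc j w] /\ 0 <= G w).

(* Logical independence of E_1..E_n, H_1..H_n: all 2^(2n) constituents
   are nonempty. *)
Definition logically_independent (Omega : Type) (n : nat)
  (E H : 'I_n -> Omega -> bool) : Prop :=
  forall a b : 'I_n -> bool, exists w, forall i, E i w = a i /\ H i w = b i.

(* The conjunction C_S of the conditional events E_i|H_i (i in S), given the
   prevision values x T of the sub-conjunctions (x [set i] = P(E_i|H_i)):
   1 if all E_i H_i (i in S) true; 0 if some not-E_i H_i (i in S) true;
   x T if exactly the H_i, i in T (T nonempty, T subset of S), are false and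
   the E_i H_i, i in S \ T, are true (T = S gives the prevision x S). *)
Definition conjRQ (Omega : Type) (n : nat) (E H : 'I_n -> Omega -> bool)
  (x : {set 'I_n} -> R) (S : {set 'I_n}) (w : Omega) : R :=
  if [exists i in S, ~~ E i w && H i w] then 0
  else if [forall i in S, H i w] then 1
  else x [set i in S | ~~ H i w].

Definition condH (Omega : Type) (n : nat) (H : 'I_n -> Omega -> bool)
  (S : {set 'I_n}) (w : Omega) : bool := [exists i in S, H i w].

Definition TL (n : nat) (v : 'I_n -> R) : R :=
  Num.max (\sum_(i < n) v i - n%:R + 1) 0.

Definition minseq (s : seq R) : R := foldr Num.min (head 0 s) (behead s).

Definition TM (n : nat) (v : 'I_n -> R) : R := minseq [seq v i | i <- enum 'I_n].

End Defs.

(* indices of the strict nonempty sub-conjunctions (coherently assessed beforehand) *)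
Definition strict_subs (n : nat) : {set {set 'I_n}} :=
  [set S : {set 'I_n} | (S != set0) && (S != setT)].

Definition familyF (n : nat) : {set {set 'I_n}} :=
  [set S : {set 'I_n} | #|S| == 1%N] :|: [set setT].

From HB Require Import structures.
From mathcomp Require Import all_boot all_order all_algebra.
From mathcomp Require Import reals.
From mathcomp Require Import ring lra.
Import Order.TTheory GRing.Theory Num.Theory.
Set Implicit Arguments.
Unset Strict Implicit.
Local Open Scope ring_scope.

(* Write C_S for the conjunction indexed by S and x_S for its prevision.

   Necessity.  Three bets on C_S and on the E_i|H_i (i in S) show that x_S is
   "Frechet bounded": 0 <= x_S, x_S <= x_i for i in S, and
   1 - sum_(i in S) (1 - x_i) <= x_S.  The bets only need the values of C_S
   to lie in [0,1], which in turn holds once all the strict sub-conjunctions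
   are Frechet bounded; so strong induction on #|S| over the coherent strict
   sub-conjunctions, and one more step for S = {1..n}, give T_L <= x_(1..n)
   <= T_M.

   Sufficiency.  Only two outcomes are needed, both with every H_i true: w1,
   where every E_i holds, and w_Z, where E_i fails exactly for i in a
   nonempty set Z.  With t = x_(1..n), t * gain(w1) + (1 - t) * gain(w_Z) is
   a linear expression in the stakes, and the Frechet bounds allow one to
   choose Z making it nonpositive (lemma [exists_nonpos_selection]); hence
   one of the two gains is nonpositive. *)

Lemma exists_set1 (T : finType) (P : pred T) (i : T) :
  [exists k in [set i], P k] = P i.
Proof.
apply/existsP/idP => [[k /andP [/set1P -> //]] | Pi].
by exists i; rewrite set11.
Qed.

Lemma forall_set1 (T : finType) (P : pred T) (i : T) :
  [forall k in [set i], P k] = P i.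
Proof.
apply/forallP/idP => [/(_ i) | Pi k]; first by rewrite set11.
by apply/implyP => /set1P ->.
Qed.

Lemma set1_neqT (n : nat) (i : 'I_n) : (1 < n)%N -> [set i] != setT.
Proof.
move=> n_gt1; apply/eqP => i_full.
by move: (cards1 i); rewrite i_full cardsT card_ord => n1; rewrite n1 in n_gt1.
Qed.

Lemma familyF_nonempty (n : nat) (j : {set 'I_n}) : (0 < n)%N ->
  j \in familyF n -> exists i, i \in j.
Proof.
move=> n_gt0; rewrite !inE => /orP [/cards1P [i ->] | /eqP ->].
  by exists i; rewrite set11.
by exists (Ordinal n_gt0); rewrite inE.
Qed.

Lemma sum_familyF (R : nmodType) (n : nat) (J : {set {set 'I_n}})
    (F : {set 'I_n} -> R) : (1 < n)%N -> J \subset familyF n ->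
  \sum_(j in J) F j = (if setT \in J then F setT else 0)
     + \sum_i (if [set i] \in J then F [set i] else 0).
Proof.
move=> n_gt1 JF.
have -> : \sum_(j in J) F j = (if setT \in J then F setT else 0)
    + \sum_(j in J | j != setT) F j.
  case: ifP => [TJ | /negbT TJ]; first by rewrite (bigD1 setT TJ).
  rewrite add0r; apply: eq_bigl => j; case jJ: (j \in J) => //=.
  by apply/esym; apply: contraNneq TJ => <-.
congr (_ + _); rewrite -big_mkcond /=.
rewrite (eq_bigl (fun i => i \in [set i | [set i] \in J])); last by move=> i; rewrite inE.
rewrite -(big_imset F (h := fun i : 'I_n => [set i]) (A := [set i | [set i] \in J]))
  /=; last by move=> i j _ _; apply: set1_inj.
apply: eq_bigl => j; apply/andP/imsetP => [[jJ jT] | [i]].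
  move: (subsetP JF j jJ); rewrite !inE (negbTE jT) orbF => /cards1P [i ji].
  by exists i; rewrite // inE -ji.
by rewrite inE => iJ ->; split => //; apply: set1_neqT.
Qed.

Lemma le_foldr_min (R : realDomainType) (t a : R) (l : seq R) :
  (t <= foldr Num.min a l) = (t <= a) && all (fun y => t <= y) l.
Proof. by elim: l => [|b l IH] /=; rewrite ?andbT // le_min IH andbCA. Qed.

Lemma le_TM (R : realType) (n : nat) (v : 'I_n -> R) (t : R) : (0 < n)%N ->
  (t <= TM v) <-> (forall i, t <= v i).
Proof.
move=> n_gt0; rewrite /TM /minseq.
case enum_eq: (enum 'I_n) => [|a l] /=.
  by move: (mem_enum 'I_n (Ordinal n_gt0)); rewrite enum_eq.
rewrite le_foldr_min; split => [/andP [ta /allP tl] i | tv].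
  have : i \in enum 'I_n by rewrite mem_enum.
  rewrite enum_eq inE => /orP [/eqP -> // | il].
  by apply: tl; apply: map_f.
by rewrite tv /=; apply/allP => _ /mapP [i _ ->].
Qed.

(* Take Z = {i | sg_i > 0} when
   some stake is positive, and otherwise a singleton of a largest stake. *)
Lemma exists_nonpos_selection (R : realType) (n : nat) (sg u : 'I_n -> R)
    (c : R) : (0 < n)%N ->
  (forall i, 0 <= u i <= c) -> c <= \sum_i u i ->
  exists2 Z : {set 'I_n}, Z != set0 &
    \sum_i sg i * (u i - c * (i \in Z)%:R) <= 0.
Proof.
move=> n_gt0 u_bnd c_le_sum.
have [i0 sg_i0 | sg_le0] := pickP (fun i => 0 < sg i).
  exists [set i | 0 < sg i]; first by apply/set0Pn; exists i0; rewrite inE.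
  apply: sumr_le0 => i _; rewrite inE.
  by have /andP := u_bnd i; case: ltP => /= ? [? ?]; nra.
have [m _ sg_max] := @arg_maxP _ _ _ (Ordinal n_gt0) predT sg isT.
exists [set m]; first by apply/set0Pn; exists m; rewrite set11.
have -> : \sum_i sg i * (u i - c * (i \in [set m])%:R)
          = \sum_i sg i * u i - sg m * c.
  under eq_bigr do rewrite mulrBr.
  rewrite sumrB; congr (_ - _).
  rewrite (bigD1 m) //= big1 ?addr0 => [|i /negbTE im].
    by rewrite set11 mulr1 mulrC.
  by rewrite in_set1 im !mulr0.
have sum_le : \sum_i sg i * u i <= sg m * \sum_i u i.
  rewrite mulr_sumr; apply: ler_sum => i _.
  by have /andP := u_bnd i; have := sg_max i isT; move=> /= ? [? ?]; nra.
by have := sg_le0 m; rewrite /= ltNge => /negbFE ?; nra.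
Qed.

Section Conjunction.
Variables (R : realType) (n : nat) (Omega : Type).
Variables (E H : 'I_n -> Omega -> bool) (x : {set 'I_n} -> R).

Lemma conjRQ_cases (S : {set 'I_n}) (w : Omega) :
  condH H S w ->
  [\/ (exists2 i, i \in S & ~~ E i w && H i w) /\ conjRQ E H x S w = 0,
      (forall i, i \in S -> E i w && H i w) /\ conjRQ E H x S w = 1 |
      [/\ [set i in S | ~~ H i w] \proper S, [set i in S | ~~ H i w] != set0,
          (forall i, i \in S -> H i w -> E i w) &
          conjRQ E H x S w = x [set i in S | ~~ H i w]]].
Proof.
rewrite /condH /conjRQ => /existsP [i0 /andP [i0S H_i0]].
case: ifP => [/existsP [i /andP [iS i_false]] | no_false].
  by apply: Or31; split => //; exists i.
have EH : forall i, i \in S -> H i w -> E i w.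
  move=> i iS H_i; apply/negPn/negP => nE; move/negbT/negP: no_false; apply.
  by apply/existsP; exists i; rewrite iS nE H_i.
case: ifP => [/forallP all_H | /negbT not_all_H].
  apply: Or32; split => // i iS; have := all_H i; rewrite iS /= => H_i.
  by rewrite H_i EH.
apply: Or33; split => //.
  apply/properP; split; first by apply/subsetP => i; rewrite inE => /andP [].
  by exists i0 => //; rewrite inE H_i0 andbF.
move: not_all_H; rewrite negb_forall => /existsP [i].
by rewrite negb_imply => /andP [iS nH]; apply/set0Pn; exists i; rewrite inE iS.
Qed.

Lemma conjRQ_allH (S : {set 'I_n}) (w : Omega) : (forall i, H i w) ->
  conjRQ E H x S w = ([forall i in S, E i w])%:R.
Proof.
move=> all_H; rewrite /conjRQ.
case: ifP => [/existsP [i /andP [iS /andP [nE _]]] | /negbT no_false].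
  suff -> : [forall i in S, E i w] = false by [].
  by apply/negbTE/forallPn; exists i; rewrite iS.
have -> : [forall i in S, H i w] by apply/forallP => i; rewrite all_H implybT.
suff -> : [forall i in S, E i w] by [].
apply/forallP => i; apply/implyP => iS; apply/negPn/negP => nE.
by move/negP: no_false; apply; apply/existsP; exists i; rewrite iS nE all_H.
Qed.

Definition gain (J : {set {set 'I_n}}) (s : {set 'I_n} -> R) (w : Omega) : R :=
  \sum_(j in J) s j * (condH H j w)%:R * (conjRQ E H x j w - x j).

Lemma coherent_gain (D : {set {set 'I_n}}) :
  coherent_on D (conjRQ E H x) (condH H) x <->
  forall (J : {set {set 'I_n}}) (s : {set 'I_n} -> R), J \subset D ->
    (exists w, [exists j in J, condH H j w]) ->
    (exists w, [exists j in J, condH H j w] /\ gain J s w <= 0) /\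
    (exists w, [exists j in J, condH H j w] /\ 0 <= gain J s w).
Proof. by split => coh J s sJD; apply: coh. Qed.

Lemma gain_term_set1 (i : 'I_n) (w : Omega) :
  (condH H [set i] w)%:R * (conjRQ E H x [set i] w - x [set i])
  = if H i w then (E i w)%:R - x [set i] else 0.
Proof.
rewrite /condH exists_set1; case: ifP => H_i; last by rewrite mul0r.
by rewrite /conjRQ exists_set1 forall_set1 H_i andbT mul1r; case: (E i w).
Qed.

(* The Frechet bounds T_L <= x_Z <= T_M for the sub-conjunction Z, in the
   form proved by induction. *)
Definition frechet_bounded (Z : {set 'I_n}) : Prop :=
  [/\ 0 <= x Z, (forall i, i \in Z -> x Z <= x [set i]) &
      1 - \sum_(i in Z) (1 - x [set i]) <= x Z].

Section Necessity.
Variable D : {set {set 'I_n}}.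
Hypothesis cohD : coherent_on D (conjRQ E H x) (condH H) x.
Hypothesis set1_in_D : forall i, [set i] \in D.
Hypothesis H_nonempty : forall i, exists w, H i w.

Lemma coherent_bet (J : {set {set 'I_n}}) (s : {set 'I_n} -> R) :
  J \subset D -> (exists w, [exists j in J, condH H j w]) ->
  (exists w, [exists j in J, condH H j w] /\ gain J s w <= 0) /\
  (exists w, [exists j in J, condH H j w] /\ 0 <= gain J s w).
Proof. exact: (proj1 (coherent_gain D) cohD). Qed.

(* Betting on E_i|H_i alone forces P(E_i|H_i) into [0,1]. *)
Lemma coherent_set1_unit (i : 'I_n) : 0 <= x [set i] <= 1.
Proof.
have [w0 H_w0] := H_nonempty i.
have sub : [set [set i]] \subset D by rewrite sub1set.
have some_cond : exists w, [exists j in [set [set i]], condH H j w].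
  by exists w0; rewrite exists_set1 /condH exists_set1.
have [[w [cond_w G_le0]] [w' [cond_w' G_ge0]]] :=
  coherent_bet (fun _ => 1) sub some_cond.
move: cond_w cond_w' G_le0 G_ge0.
rewrite /gain /condH !exists_set1 !big_set1 !mul1r !gain_term_set1 => -> ->.
by case: (E i w); case: (E i w') => /=; lra.
Qed.

Section Step.
Variable S : {set 'I_n}.
Hypothesis S_in_D : S \in D.
Hypothesis S_nonempty : S != set0.
Hypothesis S_not_set1 : forall i, [set i] != S.
Hypothesis sub_bounded :
  forall Z : {set 'I_n}, Z \proper S -> Z != set0 -> frechet_bounded Z.

Lemma conjRQ_unit (w : Omega) : condH H S w -> 0 <= conjRQ E H x S w <= 1.
Proof.
case/conjRQ_cases=> [[_ ->] | [_ ->] | [ZS Z0 _ ->]]; rewrite ?lexx ?ler01 //.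
have [z zZ] := set0Pn _ Z0; have [Z_ge0 Z_le _] := sub_bounded ZS Z0.
rewrite Z_ge0 /=; apply: le_trans (Z_le z zZ) _.
by case/andP: (coherent_set1_unit z).
Qed.

Lemma some_cond_with_S (J : {set {set 'I_n}}) :
  S \in J -> exists w, [exists j in J, condH H j w].
Proof.
move=> SJ; have [i iS] := set0Pn _ S_nonempty; have [w H_i] := H_nonempty i.
by exists w; apply/existsP; exists S; rewrite SJ; apply/existsP; exists i; rewrite iS.
Qed.

(* Bet 1 on C_S: its prevision is nonnegative. *)
Lemma coherent_conj_ge0 : 0 <= x S.
Proof.
have sub : [set S] \subset D by rewrite sub1set.
have [[w [cond_w G_le0]] _] :=
  coherent_bet (fun _ => 1) sub (some_cond_with_S (set11 S)).
rewrite exists_set1 in cond_w; move: G_le0; rewrite /gain big_set1 cond_w.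
by rewrite !mul1r; have := conjRQ_unit cond_w; lra.
Qed.

(* Bet 1 on C_S against 1 on E_i|H_i: x_S <= P(E_i|H_i) for i in S. *)
Lemma coherent_conj_le_set1 (i : 'I_n) : i \in S -> x S <= x [set i].
Proof.
move=> iS; set J := [set i] |: [set S].
have sub : J \subset D.
  by apply/subsetP => j; rewrite !inE => /orP [] /eqP -> //; apply: set1_in_D.
have SJ : S \in J by rewrite !inE eqxx orbT.
have [_ [w [cond_w G_ge0]]] :=
  coherent_bet (fun j => if j == S then 1 else -1) sub (some_cond_with_S SJ).
have cond_S : condH H S w.
  case/existsP: cond_w => j /andP [/setU1P [-> | /set1P ->] //].
  by rewrite /condH exists_set1 => H_i; apply/existsP; exists i; rewrite iS.
move: G_ge0; rewrite /gain big_setU1 ?big_set1 ?inE ?S_not_set1 //=.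
rewrite eqxx (negbTE (S_not_set1 i)) -mulrA gain_term_set1 cond_S !mul1r.
have := coherent_set1_unit i; have := conjRQ_unit cond_S.
case: (conjRQ_cases cond_S) => [[_ ->] | [all_EH ->] | [ZS Z0 EH ->]].
- by case: (H i w); case: (E i w) => /=; lra.
- by have /andP [-> ->] := all_EH i iS; rewrite /=; lra.
case H_i: (H i w); first by rewrite (EH i iS H_i) /=; lra.
have [_ Z_le _] := sub_bounded ZS Z0.
by have := Z_le i; rewrite inE iS H_i => /(_ isT); lra.
Qed.

(* At an outcome where C_S is not called off, the unit bets on the
   E_k|H_k (k in S) pay at most sum_(k in S) (1 - P(E_k|H_k)) - (1 - C_S):
   if C_S is 0 one of them is lost, if C_S is 1 all are won, and if
   C_S = x_Z the bets on Z are called off, which costs at least 1 - x_Z by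
   the induction hypothesis. *)
Lemma sum_set1_payoff_le (w : Omega) : condH H S w ->
  \sum_(k in S) (if H k w then (E k w)%:R - x [set k] else 0)
  <= \sum_(k in S) (1 - x [set k]) - 1 + conjRQ E H x S w.
Proof.
move=> cond_S; pose f k := if H k w then (E k w)%:R - x [set k] else 0.
change (\sum_(k in S) f k <= \sum_(k in S) (1 - x [set k]) - 1 + conjRQ E H x S w).
have f_le k : f k <= 1 - x [set k].
  by rewrite /f; have := coherent_set1_unit k; case: (H k w); case: (E k w) => /=; lra.
case: (conjRQ_cases cond_S) => [[[i iS /andP [nE H_i]] ->] | [all_EH ->] | [ZS Z0 EH ->]].
- rewrite (bigD1 i iS) [X in _ <= X - _ + _](bigD1 i iS) /= {1}/f H_i (negbTE nE) /=.
  have : \sum_(k in S | k != i) f k <= \sum_(k in S | k != i) (1 - x [set k]).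
    by apply: ler_sum => k _; apply: f_le.
  by lra.
- rewrite subrK le_eqVlt; apply/orP; left; apply/eqP/eq_bigr => k kS.
  by have /andP [E_k H_k] := all_EH k kS; rewrite /f E_k H_k.
rewrite (bigID (fun k => H k w)) [X in _ <= X - _ + _](bigID (fun k => H k w)) /=.
have -> : \sum_(k in S | ~~ H k w) f k = 0.
  by apply: big1 => k /andP [_ /negbTE nH]; rewrite /f nH.
have -> : \sum_(k in S | H k w) f k = \sum_(k in S | H k w) (1 - x [set k]).
  by apply: eq_bigr => k /andP [kS H_k]; rewrite /f H_k (EH k kS H_k).
have -> : \sum_(k in S | ~~ H k w) (1 - x [set k])
          = \sum_(k in [set k in S | ~~ H k w]) (1 - x [set k]).
  by apply: eq_bigl => k; rewrite inE.
by have [_ _ Z_TL] := sub_bounded ZS Z0; lra.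
Qed.

(* Bet 1 on every E_i|H_i (i in S) against 1 on C_S:
   1 - sum_(i in S) (1 - P(E_i|H_i)) <= x_S. *)
Lemma coherent_conj_ge_TL : 1 - \sum_(i in S) (1 - x [set i]) <= x S.
Proof.
set Js := [set [set k] | k in S].
have S_notin_Js : S \notin Js.
  by apply/imsetP => -[k _ Sk]; move: (S_not_set1 k); rewrite Sk eqxx.
have sub : S |: Js \subset D.
  by apply/subsetP => j /setU1P [-> // | /imsetP [k _ ->]]; apply: set1_in_D.
pose sg (j : {set 'I_n}) : R := if j == S then -1 else 1.
have [_ [w [cond_w G_ge0]]] := coherent_bet sg sub (some_cond_with_S (setU11 S Js)).
have cond_S : condH H S w.
  case/existsP: cond_w => j /andP [/setU1P [-> // | /imsetP [k kS ->]]].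
  by rewrite /condH exists_set1 => H_k; apply/existsP; exists k; rewrite kS.
have := sum_set1_payoff_le cond_S; move: G_ge0.
rewrite /gain big_setU1 //= big_imset /=; last by move=> a b _ _; apply: set1_inj.
rewrite /sg eqxx cond_S mulr1 mulN1r.
under eq_bigr => k _ do rewrite (negbTE (S_not_set1 k)) -mulrA mul1r gain_term_set1.
by lra.
Qed.

End Step.

Lemma coherent_frechet_step (S : {set 'I_n}) :
  S \in D -> S != set0 ->
  (forall Z : {set 'I_n}, Z \proper S -> Z != set0 -> frechet_bounded Z) ->
  frechet_bounded S.
Proof.
move=> S_in_D S_nonempty sub_bounded.
case: (boolP [exists i, [set i] == S]) => [/existsP [i /eqP <-] | /existsPn S_not_set1].
  have /andP [x_ge0 _] := coherent_set1_unit i.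
  by split => [// | k /set1P -> // |]; rewrite big_set1; lra.
by split; [apply: coherent_conj_ge0 | apply: coherent_conj_le_set1
          | apply: coherent_conj_ge_TL].
Qed.

End Necessity.

Lemma strict_subs_bounded : (1 < n)%N -> (forall i, exists w, H i w) ->
  coherent_on (strict_subs n) (conjRQ E H x) (condH H) x ->
  forall S, S \in strict_subs n -> frechet_bounded S.
Proof.
move=> n_gt1 H_nonempty coh.
have set1_in : forall i, [set i] \in strict_subs n.
  by move=> i; rewrite inE set1_neqT // andbT; apply/set0Pn; exists i; rewrite set11.
move=> S; elim: {S}#|S| {-2}S (leqnn #|S|) => [|k IHk] S S_le S_in.
  by move: S_in; rewrite inE -cards_eq0 -leqn0 S_le.
have S_nonempty : S != set0 by move: S_in; rewrite inE => /andP [].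
apply: (coherent_frechet_step coh set1_in H_nonempty S_in S_nonempty) => Z ZS Z0.
apply: IHk; first by rewrite -ltnS; apply: leq_trans (proper_card ZS) S_le.
by rewrite inE Z0 /=; apply: contraTneq ZS => ->; rewrite properE subsetT andbF.
Qed.

Section Sufficiency.
Hypothesis n_gt1 : (1 < n)%N.
Hypothesis indep : logically_independent E H.
Hypothesis x_set1_unit : forall i, 0 <= x [set i] <= 1.
Hypothesis x_ge_TL : TL (fun i => x [set i]) <= x setT.
Hypothesis x_le_TM : x setT <= TM (fun i => x [set i]).

Let n_gt0 : (0 < n)%N. Proof. exact: ltnW. Qed.

Lemma cond_allH (J : {set {set 'I_n}}) (w : Omega) :
  J \subset familyF n -> J != set0 -> (forall i, H i w) ->
  [exists j in J, condH H j w].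
Proof.
move=> JF /set0Pn [j jJ] all_H; have [i ij] := familyF_nonempty n_gt0 (subsetP JF j jJ).
by apply/existsP; exists j; rewrite jJ; apply/existsP; exists i; rewrite ij all_H.
Qed.

Lemma gain_allH (J : {set {set 'I_n}}) (s : {set 'I_n} -> R) (w : Omega) :
  J \subset familyF n -> (forall i, H i w) ->
  gain J s w = \sum_(j in J) s j * ([forall i in j, E i w]%:R - x j).
Proof.
move=> JF all_H; apply: eq_bigr => j jJ.
have [i ij] := familyF_nonempty n_gt0 (subsetP JF j jJ).
have -> : condH H j w by apply/existsP; exists i; rewrite ij all_H.
by rewrite conjRQ_allH // mulr1.
Qed.

Definition set1_stake (J : {set {set 'I_n}}) (s : {set 'I_n} -> R) (i : 'I_n) : R :=
  if [set i] \in J then s [set i] else 0.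

(* Mixing the outcome w1 where all E_i hold with weight t = x_(1..n) and the
   outcome wZ where exactly the E_i, i in Z, fail with weight 1 - t, the
   stake on C_(1..n) cancels out. *)
Lemma gain_mixture (J : {set {set 'I_n}}) (s : {set 'I_n} -> R)
    (Z : {set 'I_n}) (w1 wZ : Omega) :
  J \subset familyF n -> Z != set0 ->
  (forall i, E i w1 /\ H i w1) -> (forall i, E i wZ = (i \notin Z) /\ H i wZ) ->
  x setT * gain J s w1 + (1 - x setT) * gain J s wZ =
  \sum_i set1_stake J s i * ((1 - x [set i]) - (1 - x setT) * (i \in Z)%:R).
Proof.
move=> JF /set0Pn [z zZ] w1_all wZ_all.
have all_H1 i : H i w1 by case: (w1_all i).
have all_HZ i : H i wZ by case: (wZ_all i).
rewrite !gain_allH // !mulr_sumr -big_split /= sum_familyF //.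
have -> : [forall i in setT, E i w1].
  by apply/forallP => i; case: (w1_all i) => [-> _]; rewrite implybT.
have -> : [forall i in setT, E i wZ] = false.
  by apply/negbTE/forallPn; exists z; case: (wZ_all z) => [-> _]; rewrite in_setT zZ.
rewrite [X in X + _](_ : _ = 0); last by case: ifP => _ //=; ring.
rewrite add0r; apply: eq_bigr => i _; rewrite /set1_stake !forall_set1.
case: (w1_all i) => [-> _]; case: (wZ_all i) => [-> _].
by case: ifP => _; case: (i \in Z) => /=; ring.
Qed.

Lemma gain_nonpos_somewhere (J : {set {set 'I_n}}) (s : {set 'I_n} -> R) :
  J \subset familyF n -> J != set0 ->
  exists w, [exists j in J, condH H j w] /\ gain J s w <= 0.
Proof.
move=> JF J0.
move: x_ge_TL; rewrite /TL ge_max => /andP [x_ge_sum x_ge0].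
have x_le : forall i, x setT <= x [set i] := proj1 (le_TM _ _ n_gt0) x_le_TM.
have u_bnd i : 0 <= 1 - x [set i] <= 1 - x setT.
  by have := x_set1_unit i; have := x_le i; move=> ? /andP [? ?]; apply/andP; split; lra.
have c_le_sum : 1 - x setT <= \sum_i (1 - x [set i]).
  by rewrite sumrB sumr_const card_ord; lra.
have [Z Z0 mixture_le0] := exists_nonpos_selection (set1_stake J s) n_gt0 u_bnd c_le_sum.
have [w1 w1_all] := indep (fun _ => true) (fun _ => true).
have [wZ wZ_all] := indep (fun i => i \notin Z) (fun _ => true).
have all_H1 i : H i w1 by case: (w1_all i).
have all_HZ i : H i wZ by case: (wZ_all i).
have mixture_eq := gain_mixture s JF Z0 w1_all wZ_all.
have x_le1 : x setT <= 1.
  by have := x_le (Ordinal n_gt0); have /andP [_ ?] := x_set1_unit (Ordinal n_gt0); lra.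
case: (lerP (gain J s w1) 0) => [G1 | G1]; first by exists w1; rewrite cond_allH.
case: (lerP (gain J s wZ) 0) => [GZ | GZ]; first by exists wZ; rewrite cond_allH.
by exfalso; move: mixture_le0; rewrite -mixture_eq; nra.
Qed.

Lemma frechet_coherent : coherent_on (familyF n) (conjRQ E H x) (condH H) x.
Proof.
apply/coherent_gain => J s JF [w0 /existsP [j0 /andP [j0J _]]].
have J0 : J != set0 by apply/set0Pn; exists j0.
split; first exact: gain_nonpos_somewhere.
have [w [cond_w G_le0]] := gain_nonpos_somewhere (fun j => - s j) JF J0.
exists w; split => //; rewrite -oppr_le0 /gain -sumrN.
by under eq_bigr => j _ do rewrite -!mulNr.
Qed.

End Sufficiency.
End Conjunction.

Theorem theorem10 (R : realType) (n : nat) (Omega : Type)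
  (E H : 'I_n -> Omega -> bool) (x : {set 'I_n} -> R) :
  (2 <= n)%N ->
  logically_independent E H ->
  (forall i, exists w, H i w) ->
  coherent_on (strict_subs n) (conjRQ E H x) (condH H) x ->
  (coherent_on (familyF n) (conjRQ E H x) (condH H) x <->
   ((forall i : 'I_n, 0 <= x [set i] <= 1) /\
    TL (fun i => x [set i]) <= x setT <= TM (fun i => x [set i]))).
Proof.
move=> n_gt1 indep H_nonempty coh_strict; split; last first.
  by move=> [x_unit /andP [x_ge_TL x_le_TM]]; apply: frechet_coherent.
move=> cohF; have n_gt0 : (0 < n)%N by apply: ltnW.
have set1_in_F i : [set i] \in familyF n by rewrite !inE cards1.
have T_in_F : setT \in familyF n by rewrite !inE eqxx orbT.
have T_nonempty : [set: 'I_n] != set0 by apply/set0Pn; exists (Ordinal n_gt0).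
have [T_ge0 T_le_set1 T_ge_TL] : frechet_bounded x setT.
  apply: (coherent_frechet_step cohF set1_in_F H_nonempty T_in_F T_nonempty).
  move=> Z ZT Z0; apply: (strict_subs_bounded n_gt1 H_nonempty coh_strict).
  by rewrite inE Z0 -properT.
split; first exact: (coherent_set1_unit cohF set1_in_F H_nonempty).
rewrite /TL ge_max T_ge0 andbT; apply/andP; split.
  move: T_ge_TL; rewrite (eq_bigl xpredT) => [|i]; last by rewrite in_setT.
  by rewrite sumrB sumr_const card_ord; lra.
by apply/(le_TM _ _ n_gt0) => i; apply: T_le_set1; rewrite in_setT.
Qed.
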